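(* For every Zygmund vector field $X$ on $\mathbb{S}^1$, its width satisfies $w(X)\le\frac83\lVert X\rVert_{cr}$.
   Context: A vector field $X$ on $\mathbb{S}^1=\partial\mathbb{D}^2$ is written $X(z)=iz\phi_X(z)$, $\phi_X:\mathbb{S}^1\to\mathbb{R}$. For $\eta\in\overline{\mathbb{D}^2}$, $\phi_X^-(\eta)=\sup\{a(\eta):a:\mathbb{R}^2\to\mathbb{R}\text{ affine},a|_{\mathbb{S}^1}\le\phi_X\}$ and $\phi_X^+(\eta)=\inf\{a(\eta):a\text{ affine},a|_{\mathbb{S}^1}\ge\phi_X\}$. The width is $w(X)=\sup_{\eta\in\mathbb{D}^2}\frac{\phi_X^+(\eta)-\phi_X^-(\eta)}{\sqrt{1-|\eta|^2}}$. Cross-ratio norm: identify $\mathbb{S}^1$ with $\mathbb{RP}^1=\mathbb{R}\cup\{\infty\}$ by a projective identification and write $X$ as $X(x)\partial_x$; for $Q=[a,b,c,d]$, $\mathrm{cr}(Q)=\frac{(b-a)(d-c)}{(c-b)(d-a)}$, $X[Q]=\frac{X(b)-X(a)}{b-a}-\frac{X(c)-X(b)}{c-b}+\frac{X(d)-X(c)}{d-c}-\frac{X(a)-X(d)}{a-d}$, and $\lVert X\rVert_{cr}=\sup_{\mathrm{cr}(Q)=1}|X[Q]|$. $X$ is Zygmund if it is continuous and $\lVert X\rVert_{cr}<\infty$. *)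

From HB Require Import structures.
From mathcomp Require Import all_boot all_order all_algebra.
From mathcomp Require Import all_classical all_reals all_analysis.
Set Implicit Arguments. Unset Strict Implicit. Unset Printing Implicit Defensive.
Import Order.TTheory GRing.Theory Num.Theory numFieldNormedType.Exports.
Local Open Scope classical_set_scope.
Local Open Scope ring_scope.

Section ZygmundDefs.
Variable R : realType.

Definition S1 : set (R * R) := [set p | p.1 ^+ 2 + p.2 ^+ 2 = 1].
Definition D2 : set (R * R) := [set p | p.1 ^+ 2 + p.2 ^+ 2 < 1].

(* A vector field X on S^1 is given by phi_X : S^1 -> R via X(z) = i z phi_X(z);
   we represent phi_X as a function R*R -> R whose values off S1 are irrelevant. *)

Definition affine_eval (c : R * R * R) (p : R * R) : R :=
  c.1.1 + c.1.2 * p.1 + c.2 * p.2.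

Definition phi_minus (phi : R * R -> R) (eta : R * R) : \bar R :=
  ereal_sup [set (affine_eval c eta)%:E
            | c in [set c | forall p, S1 p -> affine_eval c p <= phi p]].

Definition phi_plus (phi : R * R -> R) (eta : R * R) : \bar R :=
  ereal_inf [set (affine_eval c eta)%:E
            | c in [set c | forall p, S1 p -> phi p <= affine_eval c p]].

Definition width (phi : R * R -> R) : \bar R :=
  ereal_sup [set ((phi_plus phi eta - phi_minus phi eta)
                  * ((Num.sqrt (1 - (eta.1 ^+ 2 + eta.2 ^+ 2)))^-1)%:E)%E
            | eta in D2].

(* Projective identification RP^1 -> S^1 (Cayley transform):
   x |-> z = (1 + i x)/(1 - i x) = e^{i theta} with x = tan(theta/2);
   it sends infinity to -1. *)
Definition cayley (x : R) : R * R :=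
  ((1 - x ^+ 2) / (1 + x ^+ 2), 2 * x / (1 + x ^+ 2)).

(* The vector field X = phi d/dtheta written in the x-coordinate: X(x) d/dx,
   with dx/dtheta = (1 + x^2)/2. *)
Definition Xline (phi : R * R -> R) (x : R) : R :=
  (1 + x ^+ 2) / 2 * phi (cayley x).

Definition cr (a b c d : R) : R := (b - a) * (d - c) / ((c - b) * (d - a)).

Definition Xcr (X : R -> R) (a b c d : R) : R :=
  (X b - X a) / (b - a) - (X c - X b) / (c - b)
  + (X d - X c) / (d - c) - (X a - X d) / (a - d).

(* Quadruples of pairwise distinct points with cr = 1.  (Quadruples through
   infinity are omitted; by continuity of X this does not change the sup.) *)
Definition cr1_quads : set (R * R * R * R) :=
  [set Q | let: (a, b, c, d) := Q in
           uniq [:: a; b; c; d]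
           /\ cr a b c d = 1].

Definition cr_norm (phi : R * R -> R) : \bar R :=
  ereal_sup [set (`| let: (a, b, c, d) := Q in Xcr (Xline phi) a b c d |)%:E
            | Q in cr1_quads].

End ZygmundDefs.

From HB Require Import structures.
From mathcomp Require Import all_boot all_order all_algebra.
From mathcomp Require Import all_classical all_reals all_analysis.
From mathcomp Require Import ring lra.
Set Implicit Arguments. Unset Strict Implicit. Unset Printing Implicit Defensive.
Import Order.TTheory GRing.Theory Num.Theory numFieldNormedType.Exports.
Local Open Scope classical_set_scope.
Local Open Scope ring_scope.

(* Fix eta in the disk and let m + i r be the point of the upper half-plane
   corresponding to it when the disk is read as the Klein model.  In the chart
   x = m + r t of RP^1 the field becomes Y(t) d/dt, and in the chart u = -1/t
   at infinity V(u) d/du with V(u) = u^2 Y(-1/u).  Sending the fourth point of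
   a cross-ratio-one quadruple to infinity bounds the second differences
   (Y(b) - Y(a))/(b - a) - (Y(c) - Y(b))/(c - b) + V(0)(c - a), b = (a + c)/2,
   by C = ||X||_cr, and likewise with Y and V exchanged.  A maximum principle
   for such second differences keeps Y within (5/8) C (1 + t^2) of an explicit
   quadratic q, on [-1, 1] directly and outside it by inversion.  So phi lies
   between the affine functions corresponding to q -+ (5/8) C (1 + t^2), which
   differ by (5/2) C sqrt(1 - |eta|^2) at eta; hence w(X) <= (5/2) ||X||_cr. *)

Ltac nonzero := match goal with
  | |- is_true (?x != 0) =>
    first [ done | (apply/eqP => ?; lra)
          | (match goal with H : is_true (?p != ?q) |- _ =>
               apply: (contra_neq _ H); move=> ?; nra end) ] end.
Ltac all_nonzero := repeat (apply/andP; split); nonzero.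

Section CrossRatioAlgebra.
Variable R : realFieldType.
Implicit Types (F Z X : R -> R) (a b c d m r t : R).

Definition midpoint a c := (a + c) / 2.

(* X[a, midpoint a c, c, oo] for the field F(t) d/dt, where L is the value
   at u = 0 of u^2 F(-1/u), the field in the chart u = -1/t at infinity. *)
Definition Xcr_inf F L a c :=
  (F (midpoint a c) - F a) / (midpoint a c - a)
  - (F c - F (midpoint a c)) / (c - midpoint a c) + L * (c - a).

Lemma Xcr_inf_subq F L A B G a c : a != c ->
  Xcr_inf (fun t => F t - (A * t ^+ 2 + B * t + G)) (L - A) a c = Xcr_inf F L a c.
Proof. by move=> ac; rewrite /Xcr_inf /midpoint; field; all_nonzero. Qed.

Lemma Xcr_inf_swap F L a c : a != c -> Xcr_inf F L a c = - Xcr_inf F L c a.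
Proof. by move=> ac; rewrite /Xcr_inf /midpoint [c + a]addrC; field; all_nonzero. Qed.

Lemma Xcr_inf0E Z a c : a != c ->
  Xcr_inf Z 0 a c * ((c - a) / 2) = 2 * Z (midpoint a c) - Z a - Z c.
Proof.
move=> ac; have mid_a : midpoint a c - a = (c - a) / 2 by rewrite /midpoint; field.
have c_mid : c - midpoint a c = (c - a) / 2 by rewrite /midpoint; field.
by rewrite /Xcr_inf mid_a c_mid; field; all_nonzero.
Qed.

Lemma midpoint_max_le Z C M a c : a < c -> `|Xcr_inf Z 0 a c| <= C ->
  `|Z a + Z c| <= M -> `|Z (midpoint a c)| = M -> M <= C * (c - a) / 2.
Proof.
move=> ac; rewrite !ler_norml => /andP[XC1 XC2] /andP[ZM1 ZM2] ZmidM.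
have ca2 : 0 < (c - a) / 2 by lra.
have := ler_wpM2r (ltW ca2) XC1; have := ler_wpM2r (ltW ca2) XC2.
rewrite Xcr_inf0E ?lt_eqF // => XC3 XC4.
have [Zmid0|Zmid0] := leP 0 (Z (midpoint a c)).
  by move: ZmidM; rewrite ger0_norm //; lra.
by move: ZmidM; rewrite ltr0_norm //; lra.
Qed.

Lemma uniq4I a b c d : a != b -> a != c -> a != d -> b != c -> b != d -> c != d ->
  uniq [:: a; b; c; d].
Proof. by move=> ab ac ad bc bd cd; rewrite /= !inE !negb_or ab ac ad bc bd cd. Qed.

Lemma uniq4E a b c d : uniq [:: a; b; c; d] ->
  a != b /\ a != c /\ a != d /\ b != c /\ b != d /\ c != d.
Proof.
by rewrite /= !inE !negb_or !andbT => /andP[/and3P[-> -> ->] /andP[/andP[-> ->] ->]].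
Qed.

Lemma uniq4_affine m r a b c d : r != 0 ->
  uniq [:: m + r * a; m + r * b; m + r * c; m + r * d] = uniq [:: a; b; c; d].
Proof.
move=> r0; rewrite -(map_inj_uniq (f := fun t => m + r * t)) //.
by move=> x y /addrI /(mulfI r0).
Qed.

End CrossRatioAlgebra.

Section RealLine.
Variable R : realType.
Implicit Types (F V Z X : R -> R) (a b c d m r t : R).

Lemma cr_affine m r a b c d : r != 0 -> uniq [:: a; b; c; d] ->
  cr (m + r * a) (m + r * b) (m + r * c) (m + r * d) = cr a b c d.
Proof.
by move=> r0 /uniq4E[ab [ac [ad [bc [bd cd]]]]]; rewrite /cr; field; all_nonzero.
Qed.

Lemma Xcr_affine X m r a b c d : r != 0 -> uniq [:: a; b; c; d] ->
  Xcr (fun t => X (m + r * t) / r) a b c d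
  = Xcr X (m + r * a) (m + r * b) (m + r * c) (m + r * d).
Proof.
by move=> r0 /uniq4E[ab [ac [ad [bc [bd cd]]]]]; rewrite /Xcr; field; all_nonzero.
Qed.

Lemma quadratic_continuous (A B G : R) : continuous (fun t : R => A * t ^+ 2 + B * t + G).
Proof.
move=> t; apply: cvgD; last exact: cvg_cst.
apply: cvgD; apply: cvgM; rewrite ?expr2; try apply: cvgM; exact: cvg_cst || exact: cvg_id.
Qed.

Lemma max_deviation_le Z C al be : al < be -> continuous Z -> Z al = 0 -> Z be = 0 ->
  (forall a c, al <= a <= be -> al <= c <= be -> a != c -> `|Xcr_inf Z 0 a c| <= C) ->
  forall t, al <= t <= be -> `|Z t| <= C * (be - al) / 2.
Proof.
move=> alb Zc Zal Zbe ZC.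
have C0 : 0 <= C.
  apply: le_trans (normr_ge0 _) (ZC al be _ _ (negbT (lt_eqF alb)));
  by rewrite ?lexx ?(ltW alb).
have normZc : {within `[al, be], continuous (fun t => `|Z t|)}.
  by apply: continuous_subspaceT => t; apply: cvg_norm; exact: Zc.
have [t0 /[!in_itv]/= /andP[al_t0 t0_be] t0max] := EVT_max (ltW alb) normZc.
suff Zt0 : `|Z t0| <= C * (be - al) / 2.
  by move=> t tin; apply: le_trans (t0max t _) Zt0; rewrite in_itv.
have [->|Zt0] := eqVneq (Z t0) 0.
  by rewrite normr0; apply: mulr_ge0; [apply: mulr_ge0|]; lra.
have alt0 : al < t0 by rewrite lt_neqAle al_t0 andbT; apply: contra_neq Zt0 => <-.
have t0be : t0 < be by rewrite lt_neqAle t0_be andbT; apply: contra_neq Zt0 => ->.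
have [a [c [ac [ala cbe] midE Zac]]] : exists a c,
    [/\ a < c, al <= a /\ c <= be, midpoint a c = t0 & Z a = 0 \/ Z c = 0].
  have [near_al|near_be] := leP (t0 - al) (be - t0).
    by exists al, (2 * t0 - al); split; rewrite /midpoint; try lra; left.
  by exists (2 * t0 - be), be; split; rewrite /midpoint; try lra; right.
have Zac_le : `|Z a + Z c| <= `|Z t0|.
  by case: Zac => ->; rewrite ?add0r ?addr0; apply: t0max; rewrite in_itv /=; lra.
have ain : al <= a <= be by apply/andP; split; lra.
have cin : al <= c <= be by apply/andP; split; lra.
have := midpoint_max_le ac (ZC a c ain cin (negbT (lt_eqF ac))) Zac_le.
rewrite midE => /(_ erefl) Zt0_le; apply: le_trans Zt0_le _.
by rewrite ler_wpM2r // ler_wpM2l //; lra.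
Qed.

Lemma interpolation_error_le F L C al be : al < be -> continuous F ->
  (forall a c, al <= a <= be -> al <= c <= be -> a != c -> `|Xcr_inf F L a c| <= C) ->
  forall t, al <= t <= be ->
  `|F t - (F al + (F be - F al) / (be - al) * (t - al) + L * ((t - al) * (t - be)))|
    <= C * (be - al) / 2.
Proof.
move=> alb Fc FC.
pose k := (F be - F al) / (be - al).
pose q t := L * t ^+ 2 + (k - L * (al + be)) * t + (F al - k * al + L * al * be).
have qE t : F al + k * (t - al) + L * ((t - al) * (t - be)) = q t by rewrite /q; ring.
move=> t tin; rewrite qE; apply: (@max_deviation_le (fun t => F t - q t)) => //.
- by move=> x; apply: cvgB; [exact: Fc | exact: quadratic_continuous].
- by rewrite -qE; ring.
- by rewrite -qE /k; field; nonzero.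
- by move=> a c ain cin ac; rewrite -(subrr L) Xcr_inf_subq //; exact: FC.
Qed.

(* On [0, 1], F is within C/2 of its interpolant (s/2) (1 - 4t + t^2) and
   |s/2| <= C/8; the sum is dominated by (5/8) C (1 + t^2), tightly at t = 0. *)
Lemma deviation_unit_le F L C s : continuous F ->
  (forall a c, -1 <= a <= 1 -> -1 <= c <= 1 -> a != c -> `|Xcr_inf F L a c| <= C) ->
  F 0 = s / 2 -> F 1 = - s -> F (-1) = - s -> L = s / 2 -> `|s| <= C / 4 ->
  forall t, -1 <= t <= 1 -> `|F t| <= 5 / 8 * C * (1 + t ^+ 2).
Proof.
move=> Fc FC F0 F1 Fm1 Ls /[!ler_norml] /andP[s1 s2] t /andP[t1 t2].
have FC_sub (al be : R) : -1 <= al -> be <= 1 -> forall a c,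
    al <= a <= be -> al <= c <= be -> a != c -> `|Xcr_inf F L a c| <= C.
  by move=> al1 be1 a c /andP[? ?] /andP[? ?]; apply: FC; apply/andP; split; lra.
rewrite ler_norml; have [t0|t0] := leP 0 t.
  have /FC_sub FC01 : (-1 : R) <= 0 by lra.
  have := interpolation_error_le ltr01 Fc (FC01 1 (lexx 1)) (t := t).
  rewrite F0 F1 Ls !subr0 divr1 ler_norml t0 t2 => /(_ isT) /andP[].
  have := sqr_ge0 (1 - t); rewrite ?expr2 => ? ? ?; apply/andP; split; nra.
have FC10 := FC_sub (-1) 0 (lexx _) ler01.
have := interpolation_error_le (@ltrN10 R) Fc FC10 (t := t).
rewrite F0 Fm1 Ls opprK sub0r ?add0r ler_norml t1 (ltW t0) => /(_ isT) /andP[].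
have := sqr_ge0 (1 + t); rewrite ?expr2 => ? ? ?; apply/andP; split; nra.
Qed.

Definition quad_defect F V := (2 * F 0 + 2 * V 0 - F 1 - F (-1)) / 4.

Definition quad_lead F V := V 0 - quad_defect F V / 2.

(* F - quad_approx F V takes the values s/2, -s, -s at 0, 1, -1 and its
   coefficient at infinity V 0 - quad_lead F V is s/2, where s = quad_defect F V. *)
Definition quad_approx F V t :=
  quad_lead F V * t ^+ 2 + (F 1 - F (-1)) / 2 * t + (F 0 - quad_defect F V / 2).

Lemma quad_defect_le F V C : (forall a c, a != c -> `|Xcr_inf F (V 0) a c| <= C) ->
  `|quad_defect F V| <= C / 4.
Proof.
move=> FC; have m1_1 : (-1 : R) != 1 by apply/eqP => ?; lra.
have X4s : Xcr_inf F (V 0) (-1) 1 = 4 * quad_defect F V.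
  by rewrite /Xcr_inf /midpoint addNr mul0r /quad_defect; field.
by have := FC _ _ m1_1; rewrite X4s normrM normr_nat; lra.
Qed.

Lemma quad_approx_unit_le F V C : continuous F ->
  (forall a c, a != c -> `|Xcr_inf F (V 0) a c| <= C) ->
  forall t, -1 <= t <= 1 -> `|F t - quad_approx F V t| <= 5 / 8 * C * (1 + t ^+ 2).
Proof.
move=> Fc FC; set s := quad_defect F V.
apply: (@deviation_unit_le _ (V 0 - quad_lead F V) C s) => //.
- by move=> t; apply: cvgB; [exact: Fc | exact: quadratic_continuous].
- by move=> a c _ _ ac; rewrite Xcr_inf_subq //; exact: FC.
- by rewrite /quad_approx -/s; ring.
- by rewrite /quad_approx /quad_lead -/s /s /quad_defect; field.
- by rewrite /quad_approx /quad_lead -/s /s /quad_defect; field.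
- by rewrite /quad_lead -/s; ring.
- exact: quad_defect_le.
Qed.

Lemma quad_approx_inv F V u : V 1 = F (-1) -> V (-1) = F 1 -> u != 0 ->
  quad_approx V F u = u ^+ 2 * quad_approx F V (- u^-1).
Proof.
move=> V1 Vm1 u0; rewrite /quad_approx /quad_lead /quad_defect V1 Vm1.
by field; all_nonzero.
Qed.

Lemma inversion_quadratic_le (psi W : R -> R) (K : R) :
  (forall u, u != 0 -> W u = u ^+ 2 * psi (- u^-1)) ->
  (forall u, -1 <= u <= 1 -> `|W u| <= K * (1 + u ^+ 2)) ->
  forall t, 1 <= `|t| -> `|psi t| <= K * (1 + t ^+ 2).
Proof.
move=> WE WK t t1; have t0 : t != 0 by rewrite -normr_gt0; lra.
set u := - t^-1; have u0 : u != 0 by rewrite oppr_eq0 invr_eq0.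
have ut : u ^+ 2 * t ^+ 2 = 1 by rewrite sqrrN exprVn mulVf // expf_neq0.
have u1 : -1 <= u <= 1.
  by rewrite -ler_norml normrN normfV invf_le1 // (lt_le_trans ltr01).
have := WK u u1; rewrite WE // /u invrN invrK opprK -/u normrM ger0_norm ?sqr_ge0 //.
move=> /(ler_wpM2l (sqr_ge0 t)); rewrite mulrA [t ^+ 2 * _]mulrC ut mul1r.
by rewrite mulrCA mulrDr mulr1 [t ^+ 2 * _]mulrC ut addrC.
Qed.

Lemma norm_le_limit (H : R -> R) (C d : R) : {for 0, continuous H} -> 0 < d ->
  (forall u, u != 0 -> `|u| < d -> `|H u| <= C) -> `|H 0| <= C.
Proof.
move=> Hc d0 HC.
have normH : `|H x| @[x --> 0^'] --> `|H 0|.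
  by apply: cvg_norm; exact: (proj1 (continuous_withinNx H 0) Hc).
apply: (cvgr_to_le normH); rewrite /dnbhs /within /=.
have near0 : \forall u \near (0 : R), u != 0 -> `|H u| <= C.
  by apply/nbhs_norm0P; exists d => // u /= ud u0; exact: HC.
exact: near0.
Qed.

(* The point b with cr a b c (-1/u) = 1; it tends to midpoint a c as u -> 0. *)
Definition cr1_point a c u := (a + c + 2 * a * c * u) / (2 + (a + c) * u).

Lemma cr1_point0 a c : cr1_point a c 0 = midpoint a c.
Proof. by rewrite /cr1_point /midpoint !mulr0 !addr0. Qed.

Lemma cr1_point_cr a c u : a != c -> u != 0 -> 0 < 1 + a * u -> 0 < 1 + c * u ->
  uniq [:: a; cr1_point a c u; c; - u^-1] /\ cr a (cr1_point a c u) c (- u^-1) = 1.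
Proof.
move=> ac u0 au cu; have den_gt0 : 0 < 2 + (a + c) * u by lra.
have b_a : cr1_point a c u - a = (c - a) * (1 + a * u) / (2 + (a + c) * u).
  by rewrite /cr1_point; field; nonzero.
have c_b : c - cr1_point a c u = (c - a) * (1 + c * u) / (2 + (a + c) * u).
  by rewrite /cr1_point; field; nonzero.
have x_inf x : 0 < 1 + x * u -> x != - u^-1.
  by move=> xu; apply/eqP => xE; move: xu; rewrite xE mulNr mulVf //; lra.
have ba : cr1_point a c u != a.
  by rewrite -subr_eq0 b_a !mulf_neq0 ?invr_eq0 //; nonzero.
have cb : c != cr1_point a c u.
  by rewrite -subr_eq0 c_b !mulf_neq0 ?invr_eq0 //; nonzero.
have b_gt0 : 0 < 1 + cr1_point a c u * u.
  have -> : 1 + cr1_point a c u * u = 2 * (1 + a * u) * (1 + c * u) / (2 + (a + c) * u).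
    by rewrite /cr1_point; field; nonzero.
  by rewrite divr_gt0 // !mulr_gt0.
split; first by apply: uniq4I => //; try exact: x_inf; rewrite eq_sym.
by rewrite /cr /cr1_point; field; all_nonzero.
Qed.

End RealLine.

Section InversionPair.
Variable R : realType.
Variables (F V : R -> R) (C : R).
Hypotheses (F_cont : continuous F) (V_cont : continuous V).
Hypothesis VE : forall u, u != 0 -> V u = u ^+ 2 * F (- u^-1).
Hypothesis F_cr : forall a b c d : R,
  uniq [:: a; b; c; d] -> cr a b c d = 1 -> `|Xcr F a b c d| <= C.

(* Xcr F a b c (-1/u) for b = cr1_point a c u, written through V so that it
   extends continuously to u = 0. *)
Definition Xcr_near_inf a c u :=
  let b := cr1_point a c u in
  (F b - F a) / (b - a) - (F c - F b) / (c - b)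
  + V u * (c - a) / ((1 + c * u) * (1 + a * u))
  + F c * u / (1 + c * u) - F a * u / (1 + a * u).

Lemma Xcr_near_inf0 a c : a != c -> Xcr_near_inf a c 0 = Xcr_inf F (V 0) a c.
Proof.
by move=> ac; rewrite /Xcr_near_inf cr1_point0 /Xcr_inf /midpoint; field; all_nonzero.
Qed.

Lemma Xcr_near_infE a c u : u != 0 -> uniq [:: a; cr1_point a c u; c; - u^-1] ->
  Xcr_near_inf a c u = Xcr F a (cr1_point a c u) c (- u^-1).
Proof.
move=> u0 /uniq4E[ab [ac [ad [bc [bd cd]]]]].
have inf_neq x : x != - u^-1 -> 1 + x * u != 0.
  by move=> xd; apply: contra_neq xd => xu; apply: (mulIf u0); rewrite mulNr mulVf //; lra.
move: (inf_neq _ ad) (inf_neq _ bd) (inf_neq _ cd) ab bc.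
rewrite /Xcr_near_inf /Xcr VE //; set b := cr1_point a c u => au bu cu ab bc.
by field; all_nonzero.
Qed.

Lemma Xcr_near_inf_cont a c : a != c -> {for 0, continuous (Xcr_near_inf a c)}.
Proof.
move=> ac; have [b0a cb0] : cr1_point a c 0 - a != 0 /\ c - cr1_point a c 0 != 0.
  by rewrite cr1_point0 /midpoint; split; nonzero.
have lin k l : (k + l * x : R) @[x --> 0] --> k + l * 0.
  by apply: cvgD; [exact: cvg_cst | apply: cvgM; [exact: cvg_cst | exact: cvg_id]].
have one_neq0 k : 1 + k * 0 != 0 :> R by rewrite mulr0 addr0 oner_eq0.
have b_cont : cr1_point a c x @[x --> 0] --> cr1_point a c 0.
  by apply: cvgM; [exact: lin | apply: cvgV; [rewrite mulr0 addr0; nonzero | exact: lin]].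
have Fb_cont : F (cr1_point a c x) @[x --> 0] --> F (cr1_point a c 0).
  by apply: (continuous_comp b_cont); exact: F_cont.
apply: cvgB; [apply: cvgD; [apply: cvgD; [apply: cvgB|]|]|].
- apply: cvgM; [apply: cvgB; [exact: Fb_cont | exact: cvg_cst]|].
  by apply: cvgV => //; apply: cvgB; [exact: b_cont | exact: cvg_cst].
- apply: cvgM; [apply: cvgB; [exact: cvg_cst | exact: Fb_cont]|].
  by apply: cvgV => //; apply: cvgB; [exact: cvg_cst | exact: b_cont].
- apply: cvgM; [apply: cvgM; [exact: V_cont | exact: cvg_cst]|].
  by apply: cvgV; [rewrite mulf_neq0 | apply: cvgM; apply: lin].
- apply: cvgM; [apply: cvgM; [exact: cvg_cst | exact: cvg_id]|].
  by apply: cvgV; [|apply: lin].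
- apply: cvgM; [apply: cvgM; [exact: cvg_cst | exact: cvg_id]|].
  by apply: cvgV; [|apply: lin].
Qed.

Lemma Xcr_inf_le a c : a != c -> `|Xcr_inf F (V 0) a c| <= C.
Proof.
move=> ac; rewrite -Xcr_near_inf0 //.
have K_gt0 : 0 < `|a| + `|c| + 1 by have := normr_ge0 a; have := normr_ge0 c; lra.
apply: (norm_le_limit (Xcr_near_inf_cont ac) (d := (`|a| + `|c| + 1)^-1)).
  by rewrite invr_gt0.
move=> u u0 uK; have {}uK : `|u| * (`|a| + `|c| + 1) < 1 by rewrite -ltr_pdivlMr // div1r.
have [au cu] : `|a * u| < 1 /\ `|c * u| < 1.
  rewrite !normrM; have := normr_ge0 a; have := normr_ge0 c; have := normr_ge0 u.
  by split; nra.
move: au cu; rewrite !ltr_norml => /andP[? ?] /andP[? ?].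
have [uq cr1] := @cr1_point_cr _ a c u ac u0 ltac:(lra) ltac:(lra).
by rewrite Xcr_near_infE //; exact: F_cr.
Qed.

Lemma Xcr_inf_inv0_le c : c != 0 -> `|Xcr_inf V (F 0) 0 c| <= C.
Proof.
move=> c0; have c2 : (0 + c) / 2 != 0 by rewrite add0r mulf_neq0 ?invr_eq0.
have -> : Xcr_inf V (F 0) 0 c = - Xcr_inf F (V 0) (- 2 / c) 0.
  rewrite /Xcr_inf /midpoint (VE c0) (VE c2).
  have -> : - ((0 + c) / 2)^-1 = - 2 / c by field.
  have -> : (- 2 / c + 0) / 2 = - c^-1 by field.
  by field; all_nonzero.
by rewrite normrN; apply: Xcr_inf_le; rewrite mulf_neq0 ?oppr_eq0 ?invr_eq0.
Qed.

(* Under t = -1/u the configuration (a, midpoint a c, c, oo) of V becomes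
   (-1/a, -1/midpoint a c, -1/c, 0) for F; if one of a, c, midpoint a c is 0,
   it is again a configuration with a point at infinity. *)
Lemma Xcr_inf_inv_le a c : a != c -> `|Xcr_inf V (F 0) a c| <= C.
Proof.
move=> ac; have [a0|a0] := eqVneq a 0.
  by rewrite a0; apply: Xcr_inf_inv0_le; rewrite -a0 eq_sym.
have [c0|c0] := eqVneq c 0.
  by rewrite Xcr_inf_swap // normrN c0; apply: Xcr_inf_inv0_le; rewrite -c0.
have [b0|b0] := eqVneq (midpoint a c) 0.
  have -> : c = - a by move: b0; rewrite /midpoint; lra.
  have -> : Xcr_inf V (F 0) a (- a) = Xcr_inf F (V 0) a^-1 (- a^-1).
    rewrite /Xcr_inf /midpoint (VE a0) (VE (_ : - a != 0)) ?oppr_eq0 //.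
    by rewrite !subrr !mul0r invrN opprK; field; all_nonzero.
  by apply: Xcr_inf_le; rewrite -subr_eq0 opprK -mulr2n mulrn_eq0 invr_eq0 negb_or a0.
have ninv_neq x y : x != y -> - x^-1 != - y^-1.
  by move=> xy; apply: contra_neq xy => /oppr_inj/invr_inj.
have -> : Xcr_inf V (F 0) a c = Xcr F (- a^-1) (- (midpoint a c)^-1) (- c^-1) 0.
  move: b0; rewrite /Xcr_inf /Xcr (VE a0) (VE c0); rewrite /midpoint => b0.
  by rewrite (VE b0); field; all_nonzero.
have ab : a != midpoint a c by rewrite /midpoint; apply: contra_neq ac; lra.
have bc : midpoint a c != c by rewrite /midpoint; apply: contra_neq ac; lra.
apply: F_cr; first by apply: uniq4I; rewrite ?ninv_neq ?oppr_eq0 ?invr_eq0.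
by move: b0; rewrite /cr /midpoint => b0; field; all_nonzero.
Qed.

Lemma quad_approx_le t : `|F t - quad_approx F V t| <= 5 / 8 * C * (1 + t ^+ 2).
Proof.
have V1 : V 1 = F (-1) by rewrite VE ?oner_eq0 // expr1n mul1r invr1.
have Vm1 : V (-1) = F 1.
  by rewrite VE ?oppr_eq0 ?oner_eq0 // sqrrN expr1n mul1r invrN invr1 opprK.
have [t1|t1] := leP `|t| 1.
  by apply: (quad_approx_unit_le F_cont Xcr_inf_le); rewrite -ler_norml.
apply: (@inversion_quadratic_le _ (fun t => F t - quad_approx F V t)
                                  (fun u => V u - quad_approx V F u)); last exact: ltW.
  by move=> u u0; rewrite VE // quad_approx_inv // mulrBr.
move=> u u1; apply: quad_approx_unit_le => //; exact: Xcr_inf_inv_le.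
Qed.

Lemma quad_approx_inf_le : `|V 0 - quad_lead F V| <= 5 / 8 * C.
Proof.
have C_ge0 : 0 <= C by apply: le_trans (Xcr_inf_le (oner_neq0 R)); exact: normr_ge0.
have s_le := quad_defect_le Xcr_inf_le.
by rewrite /quad_lead opprB addrC subrK normrM [`|2^-1|]gtr0_norm ?invr_gt0 //; lra.
Qed.

End InversionPair.

Section CircleCharts.
Variable R : realType.
Implicit Types (m r t u x : R).

Lemma sqrD1_neq0 x : 1 + x ^+ 2 != 0.
Proof. by rewrite gt_eqF // ltr_pwDl // sqr_ge0. Qed.

Lemma cayley_S1 x : S1 (cayley x).
Proof. by have := sqrD1_neq0 x; rewrite /S1 /cayley /= => ?; field. Qed.

Lemma cayley_S1K (z : R * R) : S1 z -> z.1 != -1 -> cayley (z.2 / (1 + z.1)) = z.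
Proof.
case: z => z1 z2; rewrite /S1 /= => z_S1 z1_neq.
have z1_1 : 1 + z1 != 0 by apply: contra_neq z1_neq; lra.
have sqrE : (z2 / (1 + z1)) ^+ 2 = (1 - z1) / (1 + z1).
  by rewrite expr_div_n (_ : z2 ^+ 2 = 1 - z1 ^+ 2); [field | lra].
by rewrite /cayley sqrE; congr (_, _); field; all_nonzero.
Qed.

Lemma pair_continuous (f g : R -> R) t : {for t, continuous f} -> {for t, continuous g} ->
  {for t, continuous (fun x => (f x, g x))}.
Proof. by move=> fc gc; apply: (@cvg_pair _ _ _ _ (nbhs (f t)) (nbhs (g t))). Qed.

Lemma sqr_cvg t : x ^+ 2 @[x --> t] --> t ^+ 2.
Proof. by rewrite expr2; apply: cvgM; exact: cvg_id. Qed.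

Lemma cayley_continuous t : {for t, continuous (@cayley R)}.
Proof.
apply: pair_continuous; apply: cvgM;
  try by apply: cvgV; [exact: sqrD1_neq0 | apply: cvgD; [exact: cvg_cst | exact: sqr_cvg]].
- by apply: cvgB; [exact: cvg_cst | exact: sqr_cvg].
- by apply: cvgM; [exact: cvg_cst | exact: cvg_id].
Qed.

Variable phi : R * R -> R.
Hypothesis phi_cont : {within @S1 R, continuous phi}.

Lemma continuous_comp_S1 (k : R -> R * R) t : {for t, continuous k} ->
  (forall u, S1 (k u)) -> {for t, continuous (phi \o k)}.
Proof.
move=> kc kS1; have phi_kt := (proj1 (subspace_continuousP _ _) phi_cont) (k t) (kS1 t).
have k_S1 : k @ t --> within (@S1 R) (nbhs (k t)).
  move=> P /= P_S1.
  have P_near : nbhs t (fun u => S1 (k u) -> P (k u)) := kc _ P_S1.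
  suff : nbhs t (fun u => P (k u)) by [].
  by apply: filterS P_near => u /=; apply; exact: kS1.
exact: cvg_trans (cvg_app phi k_S1) phi_kt.
Qed.

Lemma Xline_continuous : continuous (Xline phi).
Proof.
move=> t; apply: cvgM.
  by apply: cvgM; [apply: cvgD; [exact: cvg_cst | exact: sqr_cvg] | exact: cvg_cst].
by move: (continuous_comp_S1 (@cayley_continuous t) cayley_S1).
Qed.

Variables (m r : R).
Hypothesis r_gt0 : 0 < r.

Definition Xchart t := Xline phi (m + r * t) / r.

Definition chart_inf_den u := u ^+ 2 + (m * u - r) ^+ 2.

(* cayley (m - r / u), continued through u = 0 where it is (-1, 0) *)
Definition cayley_inf u :=
  ((u ^+ 2 - (m * u - r) ^+ 2) / chart_inf_den u, 2 * u * (m * u - r) / chart_inf_den u).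

Definition Xchart_inf u := chart_inf_den u / (2 * r) * phi (cayley_inf u).

Lemma chart_inf_den_gt0 u : 0 < chart_inf_den u.
Proof.
rewrite /chart_inf_den; have [->|u0] := eqVneq u 0.
  by rewrite expr0n mulr0 sub0r sqrrN add0r exprn_gt0.
by rewrite ltr_pwDl ?sqr_ge0 // exprn_even_gt0.
Qed.

Lemma cayley_inf_S1 u : S1 (cayley_inf u).
Proof.
have := chart_inf_den_gt0 u; rewrite /S1 /cayley_inf /chart_inf_den /= => d_gt0.
by field; nonzero.
Qed.

Lemma chart_inf_den_cvg t : chart_inf_den x @[x --> t] --> chart_inf_den t.
Proof.
apply: cvgD; first by rewrite expr2; apply: cvgM; exact: cvg_id.
by rewrite expr2; apply: cvgM; apply: cvgB; try apply: cvgM; exact: cvg_cst || exact: cvg_id.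
Qed.

Lemma cayley_inf_continuous t : {for t, continuous cayley_inf}.
Proof.
have den_neq0 : chart_inf_den t != 0 by rewrite gt_eqF ?chart_inf_den_gt0.
have lin : (m * x - r) @[x --> t] --> m * t - r.
  by apply: cvgB; [apply: cvgM; [exact: cvg_cst | exact: cvg_id] | exact: cvg_cst].
apply: pair_continuous; apply: cvgM; try by apply: cvgV => //; exact: chart_inf_den_cvg.
  by rewrite !expr2; apply: cvgB; apply: cvgM; exact: cvg_id || exact: lin.
by apply: cvgM; [apply: cvgM; [exact: cvg_cst | exact: cvg_id] | exact: lin].
Qed.

Lemma Xchart_continuous : continuous Xchart.
Proof.
move=> t; apply: cvgM; last exact: cvg_cst.
apply: (continuous_comp (f := fun t => m + r * t)); last exact: Xline_continuous.
by apply: cvgD; [exact: cvg_cst | apply: cvgM; [exact: cvg_cst | exact: cvg_id]].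
Qed.

Lemma Xchart_inf_continuous : continuous Xchart_inf.
Proof.
move=> t; apply: cvgM; first by apply: cvgM; [exact: chart_inf_den_cvg | exact: cvg_cst].
by move: (continuous_comp_S1 (@cayley_inf_continuous t) cayley_inf_S1).
Qed.

Lemma Xchart_infE u : u != 0 -> Xchart_inf u = u ^+ 2 * Xchart (- u^-1).
Proof.
move=> u0; have := chart_inf_den_gt0 u; have := sqrD1_neq0 (m + r * - u^-1).
have r0 : r != 0 by rewrite gt_eqF.
rewrite /Xchart_inf /Xchart /Xline /chart_inf_den => den1 /lt0r_neq0 den2.
have -> : cayley (m + r * - u^-1) = cayley_inf u.
  by rewrite /cayley /cayley_inf /chart_inf_den; congr (_, _); field; all_nonzero.
by field; all_nonzero.
Qed.

Lemma phi_inf_chart : phi (-1, 0) = 2 / r * Xchart_inf 0.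
Proof.
have r0 : r != 0 by rewrite gt_eqF.
rewrite /Xchart_inf /cayley_inf /chart_inf_den.
rewrite !(expr0n, mulr0, sub0r, add0r, mul0r, sqrrN) /=.
by rewrite (_ : - r ^+ 2 / r ^+ 2 = -1); field.
Qed.

Lemma phi_chart t : phi (cayley (m + r * t)) = 2 * r * Xchart t / (1 + (m + r * t) ^+ 2).
Proof.
have r0 : r != 0 by rewrite gt_eqF.
by rewrite /Xchart /Xline; field; rewrite r0 sqrD1_neq0.
Qed.

Lemma Xchart_cr C : (forall a b c d : R, uniq [:: a; b; c; d] -> cr a b c d = 1 ->
    `|Xcr (Xline phi) a b c d| <= C) ->
  forall a b c d : R, uniq [:: a; b; c; d] -> cr a b c d = 1 -> `|Xcr Xchart a b c d| <= C.
Proof.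
move=> XC a b c d abcd cr1; have r0 : r != 0 by rewrite gt_eqF.
rewrite /Xchart Xcr_affine //; apply: XC; first by rewrite uniq4_affine.
by rewrite cr_affine.
Qed.

End CircleCharts.

Section WidthBound.
Variable R : realType.
Implicit Types (m r A B G K s : R) (phi : R * R -> R).

(* The affine function a with (1 + x^2) / 2 * a (cayley x) = r * q ((x - m) / r),
   q t = A t^2 + B t + G: in the chart x = m + r t it is the field q(t) d/dt. *)
Definition chart_affine m r A B G : R * R * R :=
  let a2 := A / r in let a1 := B - 2 * m * A / r in
  let a0 := A * m ^+ 2 / r - B * m + r * G in
  ((a2 + a0, a0 - a2), a1).

Lemma chart_affine_cayley m r A B G t : r != 0 ->
  affine_eval (chart_affine m r A B G) (cayley (m + r * t))
  = 2 * r * (A * t ^+ 2 + B * t + G) / (1 + (m + r * t) ^+ 2).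
Proof.
by move=> r0; rewrite /affine_eval /chart_affine /cayley /=; field; rewrite r0 sqrD1_neq0.
Qed.

Lemma chart_affine_inf m r A B G : r != 0 ->
  affine_eval (chart_affine m r A B G) (-1, 0) = 2 / r * A.
Proof. by move=> r0; rewrite /affine_eval /chart_affine /=; field. Qed.

Lemma S1_chart m r (z : R * R) : r != 0 -> S1 z ->
  z = (-1, 0) \/ exists t, z = cayley (m + r * t).
Proof.
case: z => z1 z2 r0 z_S1; have [z1E|z1_neq] := eqVneq z1 (-1).
  have z2E : z2 = 0.
    apply/eqP; rewrite -sqrf_eq0; move: z_S1; rewrite /S1 /= z1E sqrrN expr1n.
    by move=> ?; apply/eqP; lra.
  by left; rewrite z1E z2E.
right; exists ((z2 / (1 + z1) - m) / r).
have -> : m + r * ((z2 / (1 + z1) - m) / r) = z2 / (1 + z1) by field; all_nonzero.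
by rewrite (cayley_S1K z_S1 z1_neq).
Qed.

Lemma phi_chart_sandwich phi m r A B G K : 0 < r ->
  (forall t, `|Xchart phi m r t - (A * t ^+ 2 + B * t + G)| <= K * (1 + t ^+ 2)) ->
  `|Xchart_inf phi m r 0 - A| <= K ->
  forall z, S1 z -> affine_eval (chart_affine m r (A - K) B (G - K)) z <= phi z
                    <= affine_eval (chart_affine m r (A + K) B (G + K)) z.
Proof.
move=> r_gt0 Xq Xinf_A z; have r0 : r != 0 by rewrite gt_eqF.
case/(S1_chart m r0) => [->|[t ->]].
  move: Xinf_A; rewrite (phi_inf_chart phi m r_gt0) !chart_affine_inf // ler_norml.
  by move=> /andP[? ?]; rewrite !ler_pM2l ?divr_gt0 //; apply/andP; split; lra.
move: (Xq t); rewrite (phi_chart phi m r_gt0) !chart_affine_cayley // ler_norml.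
have den_gt0 : 0 < 1 + (m + r * t) ^+ 2 by rewrite ltr_pwDl ?sqr_ge0.
move=> /andP[? ?]; rewrite !ler_pM2r ?invr_gt0 // !ler_pM2l ?mulr_gt0 //.
by apply/andP; split; lra.
Qed.

Lemma phi_plus_sub_minus_le phi (cm cp : R * R * R) eta :
  (forall z, S1 z -> affine_eval cm z <= phi z <= affine_eval cp z) ->
  (phi_plus phi eta - phi_minus phi eta <= (affine_eval cp eta - affine_eval cm eta)%:E)%E.
Proof.
move=> phi_between; rewrite EFinB; apply: leeB.
  by apply: ereal_inf_lbound; exists cp => // z /phi_between /andP[].
by apply: ereal_sup_ubound; exists cm => // z /phi_between /andP[].
Qed.

Lemma chart_affine_width e1 e2 s A B G K :
  0 < s -> s ^+ 2 = 1 - (e1 ^+ 2 + e2 ^+ 2) -> -1 < e1 ->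
  affine_eval (chart_affine (e2 / (1 + e1)) (s / (1 + e1)) (A + K) B (G + K)) (e1, e2)
  - affine_eval (chart_affine (e2 / (1 + e1)) (s / (1 + e1)) (A - K) B (G - K)) (e1, e2)
  = 4 * K * s.
Proof.
move=> s_gt0 s2 e1_gt; rewrite /affine_eval /chart_affine /=.
have e1_neq : 1 + e1 != 0 by rewrite gt_eqF //; lra.
transitivity (2 * K / s * (1 - (e1 ^+ 2 + e2 ^+ 2) + s ^+ 2)).
  by field; all_nonzero.
by rewrite -s2; field; nonzero.
Qed.

Lemma width_term_le phi C (eta : R * R) : {within @S1 R, continuous phi} ->
  (forall a b c d : R, uniq [:: a; b; c; d] -> cr a b c d = 1 ->
     `|Xcr (Xline phi) a b c d| <= C) ->
  D2 eta ->
  ((phi_plus phi eta - phi_minus phi eta)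
   * ((Num.sqrt (1 - (eta.1 ^+ 2 + eta.2 ^+ 2)))^-1)%:E <= (5 / 2 * C)%:E)%E.
Proof.
move=> phi_cont XC; case: eta => e1 e2; rewrite /D2 /= => eta_D2.
set s := Num.sqrt _; have s_gt0 : 0 < s by rewrite sqrtr_gt0; lra.
have s2 : s ^+ 2 = 1 - (e1 ^+ 2 + e2 ^+ 2) by rewrite sqr_sqrtr //; lra.
have e1_gt : -1 < e1 by have := sqr_ge0 e2; nra.
pose m := e2 / (1 + e1); pose r := s / (1 + e1).
have r_gt0 : 0 < r by rewrite divr_gt0 //; lra.
set Y := Xchart phi m r; set W := Xchart_inf phi m r.
have Y_cont : continuous Y by exact: Xchart_continuous.
have W_cont : continuous W by exact: Xchart_inf_continuous.
have WE : forall u, u != 0 -> W u = u ^+ 2 * Y (- u^-1) := Xchart_infE phi m r_gt0.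
have Y_cr := Xchart_cr m r_gt0 XC.
have sandwich := phi_chart_sandwich r_gt0 (quad_approx_le Y_cont W_cont WE Y_cr)
  (quad_approx_inf_le Y_cont W_cont WE Y_cr).
apply: le_trans (lee_wpmul2r _ (phi_plus_sub_minus_le (e1, e2) sandwich)) _.
  by rewrite lee_fin invr_ge0 ltW.
rewrite chart_affine_width // -EFinM lee_fin mulfK ?gt_eqF //; lra.
Qed.

End WidthBound.

Lemma Xcr_le_cr_norm (R : realType) (phi : R * R -> R) (a b c d : R) :
  uniq [:: a; b; c; d] -> cr a b c d = 1 ->
  ((`|Xcr (Xline phi) a b c d|)%:E <= cr_norm phi)%E.
Proof. by move=> abcd cr1; apply: ereal_sup_ubound; exists (a, b, c, d). Qed.

Lemma cr_norm_ge0 (R : realType) (phi : R * R -> R) : (0 <= cr_norm phi)%E.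
Proof.
apply: le_trans (Xcr_le_cr_norm phi (a := 0) (b := 1) (c := 3) (d := -3) _ _).
- by rewrite lee_fin.
- by apply: uniq4I; apply/eqP => ?; lra.
- by rewrite /cr; field.
Qed.

Theorem proposition5p1 (R : realType) (phi : R * R -> R) :
  {within @S1 R, continuous phi} ->
  (cr_norm phi < +oo)%E ->
  (width phi <= (8 / 3 : R)%:E * cr_norm phi)%E.
Proof.
move=> phi_cont cr_lt; have cr_fin : cr_norm phi \is a fin_num.
  by rewrite ge0_fin_numE ?cr_norm_ge0.
rewrite -(fineK cr_fin) -EFinM; set C := fine (cr_norm phi).
have C_ge0 : 0 <= C by rewrite -lee_fin fineK ?cr_norm_ge0.
have XC a b c d : uniq [:: a; b; c; d] -> cr a b c d = 1 -> `|Xcr (Xline phi) a b c d| <= C.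
  by move=> abcd cr1; rewrite -lee_fin fineK ?Xcr_le_cr_norm.
apply: ge_ereal_sup => _ [eta eta_D2 <-].
apply: le_trans (width_term_le phi_cont XC eta_D2) _.
by rewrite lee_fin ler_wpM2r //; lra.
Qed.
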